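(* Consider the stochastic process $(S_t, A_t, R_{t+1})_{t\in\mathbb{Z}}$ generated by following a behavior policy $\mu$ in a Markov decision process, with target policy $\pi$, importance sampling ratios $\rho_t = \pi(S_t,A_t)/\mu(S_t,A_t)$, state-based discount $\gamma_t=\gamma(S_t)\in[0,1]$, state-based trace parameter $\lambda_t=\lambda(S_t)\in[0,1]$, a second trace function $\bar\lambda:\mathcal{S}\to[0,1]$ with $\bar\lambda_t=\bar\lambda(S_t)$, feature vectors $\mathbf{x}_t=\mathbf{x}(S_t)\in\mathbb{R}^n$, a fixed main weight vector $\mathbf{w}\in\mathbb{R}^n$ and a fixed weight vector $\mathbf{w}^{\mathrm{sq}}\in\mathbb{R}^n$. Define $\bar G_t = R_{t+1}+\gamma_{t+1}(1-\lambda_{t+1})\mathbf{x}_{t+1}^\top\mathbf{w}$, the $\lambda$-return $G^\lambda_t=\rho_t(\bar G_t+\gamma_{t+1}\lambda_{t+1}G^\lambda_{t+1})$, $\bar r_{t+1}=\rho_t^2\bar G_t^2+2\rho_t^2\gamma_{t+1}\lambda_{t+1}\bar G_t G^\lambda_{t+1}$, $\bar\gamma_{t+1}=\rho_t^2\gamma_{t+1}^2\lambda_{t+1}^2$, the $\bar\lambda$-squared-return $\bar V^{\bar\lambda}_t=\bar r_{t+1}+\bar\gamma_{t+1}\big((1-\bar\lambda_{t+1})\mathbf{x}_{t+1}^\top\mathbf{w}^{\mathrm{sq}}+\bar\lambda_{t+1}\bar V^{\bar\lambda}_{t+1}\big)$, and $\delta^{\bar\lambda}_t=\bar V^{\bar\lambda}_t-\mathbf{x}_t^\top\mathbf{w}^{\mathrm{sq}}$.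 Let $\bar g_{t+1}$ be an unbiased estimate of $\mathbb{E}[G^\lambda_{t+1}\mid S_{t+1}]$, i.e. $\mathbb{E}[\bar g_{t+1}\mid \mathcal{F}_{t+1}]=\mathbb{E}[G^\lambda_{t+1}\mid S_{t+1}]$, where $\mathcal{F}_{t+1}$ is the history $(\ldots,S_t,A_t,R_{t+1},S_{t+1})$ (and similarly at every time step). Define $\bar\delta_t=(\rho_t^2\bar G_t^2+2\rho_t^2\gamma_{t+1}\lambda_{t+1}\bar G_t\bar g_{t+1})+\bar\gamma_{t+1}\mathbf{x}_{t+1}^\top\mathbf{w}^{\mathrm{sq}}-\mathbf{x}_t^\top\mathbf{w}^{\mathrm{sq}}$ and the trace $\bar{\mathbf{z}}_t=\mathbf{x}_t+\bar\gamma_t\bar\lambda_t\bar{\mathbf{z}}_{t-1}$. Then $$\mathbb{E}[\delta^{\bar\lambda}_t\mathbf{x}_t]=\mathbb{E}[\bar\delta_t\bar{\mathbf{z}}_t].$$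
   Context: Expectations $\mathbb{E}$ are taken with respect to the stationary behavior of the process induced by following $\mu$ (so expectations of time-shifted quantities coincide), and all quantities involved (the recursively defined returns and the trace) are assumed well defined with finite expectations. The MDP has finite state set $\mathcal{S}$, action set $\mathcal{A}$, transition kernel $P$; the Markov property holds. *)

From HB Require Import structures.
From mathcomp Require Import all_boot all_order all_algebra.
From mathcomp Require Import all_classical all_reals all_analysis.
Set Implicit Arguments. Unset Strict Implicit. Unset Printing Implicit Defensive.
Import Order.TTheory GRing.Theory Num.Theory.
Local Open Scope classical_set_scope.
Local Open Scope ring_scope.

Section defs.
Context {d : measure_display} {T : measurableType d} {R : realType}.
Variable P : probability T R.

Definition Ex (X : T -> R) : \bar R := (\int[P]_w (X w)%:E)%E.

Definition integ (X : T -> R) : Prop := P.-integrable setT (EFin \o X).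

Definition meas_wrt (F : set (set T)) (X : T -> R) : Prop :=
  forall B : set R, measurable B -> F (X @^-1` B).

Definition is_cexp (F : set (set T)) (X h : T -> R) : Prop :=
  [/\ meas_wrt F h, integ h &
      forall B, F B -> (\int[P]_(w in B) (h w)%:E = \int[P]_(w in B) (X w)%:E)%E].

Context {S A : finType}.
Variables (St : int -> T -> S) (At : int -> T -> A) (Rt : int -> T -> R).
(* Rt u is the reward R_u (so R_{t+1} is Rt (t+1)). *)

(* generators of F_t = sigma(..., S_{t-1}, A_{t-1}, R_t, S_t) *)
Definition hist_gen (t : int) : set (set T) :=
  [set B | (exists u s, u <= t /\ B = St u @^-1` [set s]) \/
           (exists u a, u < t /\ B = At u @^-1` [set a]) \/
           (exists u (C : set R), [/\ u <= t, measurable C & B = Rt u @^-1` C])].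

Definition hist (t : int) : set (set T) := <<s hist_gen t >>.

Definition histA (t : int) : set (set T) :=
  <<s hist_gen t `|` [set B | exists a, B = At t @^-1` [set a]] >>.

Definition fut (t : int) : set (set T) :=
  <<s [set B | (exists u s, t <= u /\ B = St u @^-1` [set s]) \/
               (exists u a, t <= u /\ B = At u @^-1` [set a]) \/
               (exists u (C : set R), [/\ t < u, measurable C & B = Rt u @^-1` C])] >>.

Definition sigS (t : int) : set (set T) :=
  <<s [set B | exists s, B = St t @^-1` [set s]] >>.

End defs.

Definition dotv {R : realType} {n : nat} (u v : 'rV[R]_n) : R :=
  \sum_(i < n) u ord0 i * v ord0 i.

From HB Require Import structures.
From mathcomp Require Import all_boot all_order all_algebra.
From mathcomp Require Import all_classical all_reals all_analysis.
From mathcomp Require Import measurable_realfun.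
Import Order.TTheory GRing.Theory Num.Theory.
Local Open Scope classical_set_scope.
Local Open Scope ring_scope.
Import HBSimple HBNNSimple.
From mathcomp Require Import lra ring.

(* Write deltaL_t := V_t - x_t.wsq.  Unfolding the recursions for V_t and
   z_(t+1) gives the pointwise identity
     deltaL_t z_t + deltaL_(t+1) x_(t+1)
       = deltab_t z_t + 2 Y_t (G_(t+1) - gb_(t+1)) + deltaL_(t+1) z_(t+1),
   with Y_t := rho_t^2 gamma_(t+1) lambda_(t+1) Gbar_t z_t a function of the
   history F_(t+1).  By the Markov property E[G_(t+1) | S_(t+1)] is also a
   version of E[G_(t+1) | F_(t+1)], hence of E[gb_(t+1) | F_(t+1)], so
   G_(t+1) - gb_(t+1) integrates to zero on every set of F_(t+1) and is
   therefore orthogonal to Y_t (approximate Y_t by F_(t+1)-simple functions and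
   pass to the limit by dominated convergence).  By stationarity
   deltaL_(t+1) z_(t+1) and deltaL_(t+1) x_(t+1) have the same means as
   deltaL_t z_t and deltaL_t x_t, so taking expectations in the identity leaves
   E[deltaL_t x_t] = E[deltab_t z_t]. *)

Section dominated_sfun_approximation.
Context {d} {T : measurableType d} {R : realType} {f : T -> R}.
Hypothesis mf : measurable_fun setT f.

Lemma sfun_approx_dominated : exists g : {sfun T >-> R}^nat,
  (forall x, (fun k => (g k : T -> R) x) @ \oo --> (f x : R^o)) /\
  (forall k x, `|(g k : T -> R) x| <= `|f x|).
Proof.
have mfp : measurable_fun setT (EFin \o f^\+ : T -> \bar R).
  by apply/measurable_EFinP; exact: measurable_funrpos.
have mfn : measurable_fun setT (EFin \o f^\- : T -> \bar R).
  by apply/measurable_EFinP; exact: measurable_funrneg.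
pose a k : {sfun T >-> R} := nnsfun_approx measurableT mfp k.
pose b k : {sfun T >-> R} := nnsfun_approx measurableT mfn k.
have approx_part (h : T -> R) (mh : measurable_fun setT (EFin \o h : T -> \bar R)) :
    (forall x, 0 <= h x) ->
    (forall x, (fun k => nnsfun_approx measurableT mh k x) @ \oo --> (h x : R^o)) /\
    (forall k x, nnsfun_approx measurableT mh k x <= h x).
  move=> h0; split => [x|k x].
    have := @cvg_nnsfun_approx _ T R setT measurableT _ mh _ x I.
    by move=> /(_ (fun y _ => h0 y)) /fine_cvgP [].
  rewrite -lee_fin nnsfun_approxE.
  by apply: (le_approx k (x:=x)) => // y _; rewrite lee_fin.
have [a_cvg a_le] := approx_part _ mfp (funrpos_ge0 f).
have [b_cvg b_le] := approx_part _ mfn (funrneg_ge0 f).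
exists (fun k => a k - b k); split => [x|k x].
  have -> : f x = f^\+ x - f^\- x by rewrite -[in LHS](funrposBneg f).
  exact: cvgB (a_cvg x) (b_cvg x).
have a0 : 0 <= a k x by [].
have b0 : 0 <= b k x by [].
have afx : a k x <= f^\+ x := a_le k x.
have bfx : b k x <= f^\- x := b_le k x.
have -> : `|f x| = f^\+ x + f^\- x.
  by rewrite -[LHS]/((Num.norm \o f) x) -funrposDneg.
have -> : (a k - b k) x = a k x - b k x by rewrite sfunB.
by rewrite ler_norml; lra.
Qed.

End dominated_sfun_approximation.

Section meas_wrt_generated.
Context {d} {T : measurableType d} {R : realType} {G : set (set T)}.
Local Notation TG := (g_sigma_algebraType G).

Lemma meas_wrtP (f : T -> R) :
  meas_wrt <<s G>> f <-> measurable_fun (T:=TG) setT (f : TG -> R).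
Proof.
split=> [mf _ B mB|mf B mB]; first by rewrite setTI; exact: mf.
by have := mf measurableT B mB; rewrite setTI.
Qed.

Lemma meas_wrtM (f g : T -> R) : meas_wrt <<s G>> f -> meas_wrt <<s G>> g ->
  meas_wrt <<s G>> (fun x => f x * g x).
Proof.
by move=> /meas_wrtP mf /meas_wrtP mg; apply/meas_wrtP; exact: measurable_funM.
Qed.

Lemma meas_wrtD (f g : T -> R) : meas_wrt <<s G>> f -> meas_wrt <<s G>> g ->
  meas_wrt <<s G>> (fun x => f x + g x).
Proof.
by move=> /meas_wrtP mf /meas_wrtP mg; apply/meas_wrtP; exact: measurable_funD.
Qed.

Lemma meas_wrt_comp_fin (K : finType) (key : T -> K) (phi : K -> R) :
  (forall k, <<s G>> (key @^-1` [set k])) -> meas_wrt <<s G>> (phi \o key).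
Proof.
move=> Gkey B mB.
have -> : (phi \o key) @^-1` B =
    \big[setU/set0]_(k <- enum K | phi k \in B) key @^-1` [set k].
  rewrite -bigcup_seq_cond; apply/seteqP; split => x /=.
    by move=> Bx; exists (key x) => //=; rewrite mem_enum mem_set.
  by move=> [k /= /andP[_ /set_mem kB] ->].
by apply: (@bigsetU_measurable _ TG) => k _; exact: Gkey.
Qed.

Hypothesis G_meas : G `<=` measurable.

Lemma g_sigma_measurable : <<s G>> `<=` measurable.
Proof. by apply: smallest_sub; [exact: sigma_algebra_measurable | exact: G_meas]. Qed.

Lemma measurable_fun_g_sigma (h : T -> R) :
  measurable_fun (T:=TG) setT (h : TG -> R) -> measurable_fun setT h.
Proof. by move=> mh _ B mB; apply: g_sigma_measurable; exact: mh measurableT B mB. Qed.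

End meas_wrt_generated.

Section orthogonality.
Context {d} {T : measurableType d} {R : realType} {P : probability T R}.
Context {G : set (set T)} {D : T -> R}.
Hypothesis G_meas : G `<=` measurable.
Local Notation TG := (g_sigma_algebraType G).
Hypothesis intD : integ P D.
Hypothesis D_perp : forall B, <<s G>> B -> (\int[P]_(x in B) (D x)%:E = 0)%E.

Let mD : measurable_fun setT D.
Proof. by case/integrableP: intD => /measurable_EFinP. Qed.

Lemma integrable_bounded_mul (h : T -> R) (c : R) : measurable_fun setT h ->
  (forall x, `|h x| <= c) -> integ P (fun x => h x * D x).
Proof.
move=> mh hc.
apply: (@le_integrable _ _ _ _ _ measurableT _ (fun x => (c * D x)%:E)).
- by apply/measurable_EFinP; exact: measurable_funM.
- move=> x _ /=; rewrite lee_fin !normrM ler_wpM2r //.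
  by rewrite (le_trans (hc x)) // ler_norm.
- by apply: (integrableZl measurableT c intD).
Qed.

Lemma integral_indic_mul0 (A : set T) (c : R) : <<s G>> A ->
  (\int[P]_x ((c * \1_A x * D x)%:E) = 0)%E.
Proof.
move=> GA; have mA := g_sigma_measurable G_meas _ GA.
have intAD : integ P (fun x => \1_A x * D x).
  apply: (@integrable_bounded_mul _ 1); first exact: measurable_indic.
  by move=> x; rewrite indicE; case: (x \in A); rewrite ?normr1 ?normr0.
under eq_integral do rewrite -mulrA EFinM.
rewrite integralZl // (_ : (fun x => _) = (fun x => (D x)%:E) \_ A); last first.
  by apply/funext => x; rewrite /patch indicE; case: (x \in A); rewrite ?mul1r ?mul0r.
by rewrite -integral_mkcond D_perp // mule0.
Qed.

Lemma integral_sfun_mul0 (g : {sfun TG >-> R}) :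
  (\int[P]_x (((g : TG -> R) x * D x)%:E) = 0)%E.
Proof.
under eq_integral do rewrite (fimfunEord g) big_distrl /= -sumEFin.
set s := finmap.enum_fset _.
have Gg i : <<s G>> (g @^-1` [set s`_i]).
  exact: (measurable_funPTI g (measurable_set1 _)).
rewrite integral_sum //; first by apply: big1 => i _; exact: integral_indic_mul0.
move=> i; apply: (@integrable_bounded_mul _ `|s`_i|).
  by apply: measurable_funM => //; exact/measurable_indic/(g_sigma_measurable G_meas).
move=> x; rewrite normrM indicE.
by case: (_ \in _); rewrite ?normr1 ?normr0 ?mulr1 ?mulr0.
Qed.

Lemma Ex_mul_perp0 (Y : T -> R) : meas_wrt <<s G>> Y ->
  integ P (fun x => Y x * D x) -> Ex P (fun x => Y x * D x) = 0%E.
Proof.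
move=> /meas_wrtP mY intYD.
have [g [gY gle]] := sfun_approx_dominated mY.
pose f_ k (x : T) := (((g k : TG -> R) x * D x)%:E).
have mf_ k : measurable_fun setT (f_ k).
  apply/measurable_EFinP; apply: measurable_funM => //.
  by apply: (measurable_fun_g_sigma G_meas); exact: measurable_funPT.
have mYD : measurable_fun setT (EFin \o (fun x => Y x * D x)).
  by case/integrableP: intYD.
have f_YD : {ae P, forall x, setT x ->
    f_ ^~ x @ \oo --> (EFin \o (fun x => Y x * D x)) x}.
  by apply: aeW => x _; apply: cvg_EFin; [exact: nearW | exact: cvgMl (gY x)].
have f_le : {ae P, forall x k, setT x -> (`|f_ k x| <= `|Y x * D x|%:E)%E}.
  by apply: aeW => x k _; rewrite lee_fin !normrM ler_wpM2r.
have [_ _] := dominated_convergence measurableT mf_ mYD f_YD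
  (integrable_abse intYD) f_le.
rewrite (_ : [sequence _]_k = cst 0%E); last first.
  by apply/funext => k /=; exact: integral_sfun_mul0.
by move=> /(cvg_lim (@ereal_hausdorff R)); rewrite lim_cst.
Qed.

End orthogonality.

Section history.
Context {d} {T : measurableType d} {R : realType} {S A : finType}
  {St : int -> T -> S} {At : int -> T -> A} {Rt : int -> T -> R}.
Local Notation hist := (hist St At Rt).

Lemma hist_gen_measurable t :
  (forall u s, measurable (St u @^-1` [set s])) ->
  (forall u a, measurable (At u @^-1` [set a])) ->
  (forall u, measurable_fun setT (Rt u)) ->
  hist_gen St At Rt t `<=` measurable.
Proof.
move=> mS mA mR B [[u [s [_ ->]]]|[[u [a [_ ->]]]|[u [C [_ mC ->]]]]] //.
by rewrite -[X in measurable X]setTI; exact: mR measurableT C mC.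
Qed.

Lemma hist_le t u : t <= u -> hist t `<=` hist u.
Proof.
move=> tu; apply: sub_smallest2r; first exact: smallest_sigma_algebra.
move=> B [[v [s [vt ->]]]|[[v [a [vt ->]]]|[v [C [vt mC ->]]]]].
- by left; exists v, s; split => //; exact: le_trans tu.
- by right; left; exists v, a; split => //; exact: lt_le_trans tu.
- by right; right; exists v, C; split => //; exact: le_trans tu.
Qed.

Lemma meas_wrt_hist_le t u (f : T -> R) : t <= u ->
  meas_wrt (hist t) f -> meas_wrt (hist u) f.
Proof. by move=> tu mf B mB; exact: hist_le tu _ (mf B mB). Qed.

Lemma meas_wrt_hist_Rt t u : u <= t -> meas_wrt (hist t) (Rt u).
Proof. by move=> ut C mC; apply: sub_gen_smallest; right; right; exists u, C. Qed.

Lemma meas_wrt_hist_St t u (phi : S -> R) : u <= t ->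
  meas_wrt (hist t) (phi \o St u).
Proof.
by move=> ut; apply: meas_wrt_comp_fin => s; apply: sub_gen_smallest; left; exists u, s.
Qed.

Lemma meas_wrt_hist_StAt t u (phi : S -> A -> R) : u < t ->
  meas_wrt (hist t) (fun o => phi (St u o) (At u o)).
Proof.
move=> ut; apply: (@meas_wrt_comp_fin _ _ _ _ _ (fun o => (St u o, At u o))
  (fun p => phi p.1 p.2)) => -[s a].
have -> : (fun o => (St u o, At u o)) @^-1` [set (s, a)] =
    St u @^-1` [set s] `&` At u @^-1` [set a].
  by apply/seteqP; split => o /=; [case => -> ->|case => -> ->].
apply: (@measurableI _ (g_sigma_algebraType (hist_gen St At Rt t))).
  by apply: sub_gen_smallest; left; exists u, s; split => //; exact: ltW.
by apply: sub_gen_smallest; right; left; exists u, a.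
Qed.

End history.

Section expectation.
Context {d} {T : measurableType d} {R : realType} {P : probability T R}.

Lemma Ex_comp_measure_preserving (th : T -> T) (f : T -> R) :
  measurable_fun setT th -> (forall B, measurable B -> P (th @^-1` B) = P B) ->
  integ P f -> integ P (f \o th) -> Ex P (f \o th) = Ex P f.
Proof.
move=> mth th_pres intf intfth.
have mf : measurable_fun setT (EFin \o f) by case/integrableP: intf.
have := integral_pushforward mth (mu:=P) (D:=setT) mf.
rewrite preimage_setT => /(_ intfth measurableT) push.
transitivity (\int[pushforward P th]_y (f y)%:E)%E; first exact/esym/push.
by apply: eq_measure_integral => B mB _ /=; rewrite /pushforward th_pres.
Qed.

Lemma integral_sub_eq0_of_cexp {F : set (set T)} {X1 X2 h : T -> R} :
  F `<=` measurable -> integ P X1 -> integ P X2 ->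
  is_cexp P F X1 h -> is_cexp P F X2 h ->
  forall B, F B -> (\int[P]_(o in B) (X1 o - X2 o)%:E = 0)%E.
Proof.
move=> F_meas int1 int2 [_ inth h1] [_ _ h2] B FB; have mB := F_meas B FB.
under eq_integral do rewrite EFinB.
rewrite integralB //; [|exact: integrableS int1|exact: integrableS int2].
rewrite -h1 // -h2 // subee //.
by apply: integrable_fin_num => //; exact: integrableS inth.
Qed.

Lemma integD (f g : T -> R) : integ P f -> integ P g -> integ P (fun o => f o + g o).
Proof. by move=> intf intg; exact: eq_integrable (integrableD measurableT intf intg). Qed.

Lemma integZ (c : R) (f : T -> R) : integ P f -> integ P (fun o => c * f o).
Proof. by move=> intf; exact: eq_integrable (integrableZl measurableT c intf). Qed.

Lemma integB (f g : T -> R) : integ P f -> integ P g -> integ P (fun o => f o - g o).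
Proof. by move=> intf intg; exact: eq_integrable (integrableB measurableT intf intg). Qed.

Lemma ExD (f g : T -> R) : integ P f -> integ P g ->
  Ex P (fun o => f o + g o) = (Ex P f + Ex P g)%E.
Proof. by move=> intf intg; rewrite /Ex -integralD. Qed.

Lemma ExZ (c : R) (f : T -> R) : integ P f -> Ex P (fun o => c * f o) = (c%:E * Ex P f)%E.
Proof. by move=> intf; rewrite /Ex -integralZl. Qed.

Lemma Ex_telescope {a a' b b' c e : T -> R} (k : R) :
  integ P a -> integ P a' -> integ P b' -> integ P c -> integ P e ->
  (forall o, a o + b' o = c o + k * e o + a' o) ->
  Ex P a' = Ex P a -> Ex P b' = Ex P b -> Ex P e = 0%E -> Ex P b = Ex P c.
Proof.
move=> ia ia' ib' ic ie /funext/(congr1 (Ex P)) + Ea Eb Ee.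
rewrite !ExD ?ExZ //; try by [exact: integZ | apply: integD => //; exact: integZ].
rewrite Ea Eb Ee mule0 adde0 addeC => /(congr1 (fun v => v - Ex P a)%E).
by rewrite /= !addeK //; exact: integrable_fin_num.
Qed.

End expectation.

Theorem theorem1
  (d : measure_display) (T : measurableType d) (R : realType)
  (P : probability T R) (S A : finType) (n : nat)
  (* MDP: transition kernel, behaviour and target policies *)
  (Ptr : S -> A -> S -> R) (mu pi : S -> A -> R)
  (* state-based discount, trace parameters, features, weights *)
  (gam lam lamb : S -> R) (x : S -> 'rV[R]_n) (w wsq : 'rV[R]_n)
  (* the process (S_t, A_t, R_t) *)
  (St : int -> T -> S) (At : int -> T -> A) (Rt : int -> T -> R)
  (* recursively defined quantities: G^lambda_t, Vbar^lambdabar_t, zbar_t,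
     and the estimates gbar_t *)
  (G V : int -> T -> R) (z : int -> T -> 'rV[R]_n) (gb : int -> T -> R) :
  (* the MDP data *)
  (forall s a s', 0 <= Ptr s a s') -> (forall s a, \sum_s' Ptr s a s' = 1) ->
  (forall s a, 0 <= mu s a) -> (forall s, \sum_a mu s a = 1) ->
  (forall s a, 0 <= pi s a) -> (forall s, \sum_a pi s a = 1) ->
  (forall s a, 0 < pi s a -> 0 < mu s a) ->
  (forall s, 0 <= gam s <= 1) -> (forall s, 0 <= lam s <= 1) ->
  (forall s, 0 <= lamb s <= 1) ->
  (* random variables *)
  (forall t s, measurable (St t @^-1` [set s])) ->
  (forall t a, measurable (At t @^-1` [set a])) ->
  (forall t, measurable_fun setT (Rt t)) ->
  (* actions are drawn from mu *)
  (forall t a B, hist St At Rt t B ->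
     P (B `&` At t @^-1` [set a]) = (\int[P]_(o in B) (mu (St t o) a)%:E)%E) ->
  (* transitions follow Ptr *)
  (forall t s' B, histA St At Rt t B ->
     P (B `&` St (t + 1) @^-1` [set s']) =
       (\int[P]_(o in B) (Ptr (St t o) (At t o) s')%:E)%E) ->
  (* Markov property: given S_t, the future is independent of the history *)
  (forall t (X h : T -> R), meas_wrt (fut St At Rt t) X -> integ P X ->
     is_cexp P (sigS St t) X h -> is_cexp P (hist St At Rt t) X h) ->
  (* stationarity: a measure-preserving time shift *)
  (exists theta : T -> T, [/\ measurable_fun setT theta,
     (forall B, measurable B -> P (theta @^-1` B) = P B),
     (forall t, [/\ St (t + 1) = St t \o theta, At (t + 1) = At t \o theta
                   & Rt (t + 1) = Rt t \o theta]) &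
     (forall t, [/\ G (t + 1) = G t \o theta, V (t + 1) = V t \o theta
                   & z (t + 1) = z t \o theta])]) ->
  let rho t o := pi (St t o) (At t o) / mu (St t o) (At t o) in
  let gm t o := gam (St t o) in
  let lm t o := lam (St t o) in
  let lb t o := lamb (St t o) in
  let xt t o := x (St t o) in
  let Gbar t o := Rt (t + 1) o + gm (t + 1) o * (1 - lm (t + 1) o) * dotv (xt (t + 1) o) w in
  let rbar t o := (* rbar_{t+1} *)
    rho t o ^+ 2 * Gbar t o ^+ 2
    + 2 * rho t o ^+ 2 * gm (t + 1) o * lm (t + 1) o * Gbar t o * G (t + 1) o in
  let gbar t o := (* gammabar_t *)
    rho (t - 1) o ^+ 2 * gm t o ^+ 2 * lm t o ^+ 2 in
  let deltaL t o := V t o - dotv (xt t o) wsq in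
  let deltab t o :=
    (rho t o ^+ 2 * Gbar t o ^+ 2
     + 2 * rho t o ^+ 2 * gm (t + 1) o * lm (t + 1) o * Gbar t o * gb (t + 1) o)
    + gbar (t + 1) o * dotv (xt (t + 1) o) wsq - dotv (xt t o) wsq in
  (* recursive definitions *)
  (forall t o, G t o = rho t o * (Gbar t o + gm (t + 1) o * lm (t + 1) o * G (t + 1) o)) ->
  (forall t o, V t o = rbar t o + gbar (t + 1) o *
     ((1 - lb (t + 1) o) * dotv (xt (t + 1) o) wsq + lb (t + 1) o * V (t + 1) o)) ->
  (forall t o, z t o = xt t o + (gbar t o * lb t o) *: z (t - 1) o) ->
  (* gbar_{t+1} is an unbiased estimate: E[gbar_{t+1} | F_{t+1}] = E[G_{t+1} | S_{t+1}] *)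
  (forall t, exists h : T -> R,
     is_cexp P (hist St At Rt (t + 1)) (gb (t + 1)) h /\
     is_cexp P (sigS St (t + 1)) (G (t + 1)) h) ->
  (* well-definedness: measurability and finite expectations *)
  (forall t, meas_wrt (fut St At Rt t) (G t)) ->
  (forall t i, meas_wrt (hist St At Rt t) (fun o => z t o ord0 i)) ->
  (forall t, integ P (G t) /\ integ P (V t) /\ integ P (gb t)) ->
  (forall t i, [/\ integ P (fun o => deltaL t o * xt t o ord0 i),
     integ P (fun o => deltaL t o * z t o ord0 i),
     integ P (fun o => deltab t o * z t o ord0 i),
     integ P (fun o => rho t o ^+ 2 * gm (t + 1) o * lm (t + 1) o * Gbar t o
                         * z t o ord0 i * G (t + 1) o) &
     integ P (fun o => rho t o ^+ 2 * gm (t + 1) o * lm (t + 1) o * Gbar t o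
                         * z t o ord0 i * gb (t + 1) o)]) ->
  forall (t : int) (i : 'I_n),
    Ex P (fun o => deltaL t o * xt t o ord0 i) = Ex P (fun o => deltab t o * z t o ord0 i).
Proof.
move=> _ _ _ _ _ _ _ _ _ _ mS mA mR _ _ markov [th [mth th_pres shiftSAR shiftGVz]].
move=> rho gm lm lb xt Gbar rbar gbar deltaL deltab _ recV recz unbiased.
move=> mG mz intGVgb int_t t i.
set Y := fun o => rho t o ^+ 2 * gm (t + 1) o * lm (t + 1) o * Gbar t o * z t o ord0 i.
set D := fun o => G (t + 1) o - gb (t + 1) o.
have hist_meas u := hist_gen_measurable u mS mA mR.
have [intG [_ intgb]] := intGVgb (t + 1).
have [i1 i2 i3 i4 i5] := int_t t i.
have [j1 j2 _ _ _] := int_t (t + 1) i.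
have D_perp B : hist St At Rt (t + 1) B -> (\int[P]_(o in B) (D o)%:E = 0)%E.
  have [h [gb_h G_h]] := unbiased t.
  apply: (integral_sub_eq0_of_cexp (g_sigma_measurable (hist_meas _)) intG intgb _ gb_h).
  exact: markov (mG _) intG G_h.
have mY : meas_wrt (hist St At Rt (t + 1)) Y.
  have tt1 : t <= t + 1 by rewrite lerDl.
  apply: meas_wrtM; [apply: meas_wrtM; [apply: meas_wrtM; [apply: meas_wrtM|]|]|].
  - by apply: (meas_wrt_hist_StAt _ _ (fun s a => (pi s a / mu s a) ^+ 2)); rewrite ltrDl.
  - exact: meas_wrt_hist_St.
  - exact: meas_wrt_hist_St.
  - apply: meas_wrtD; first exact: meas_wrt_hist_Rt.
    exact: (meas_wrt_hist_St _ _ (fun s => gam s * (1 - lam s) * dotv (x s) w)).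
  - exact: meas_wrt_hist_le (mz t i).
have intYD : integ P (fun o => Y o * D o).
  apply: eq_integrable (integrableB measurableT i4 i5) => // o _ /=.
  by rewrite -EFinB mulrBr.
have stationary (f : int -> T -> R) : f (t + 1) = f t \o th ->
    integ P (f t) -> integ P (f (t + 1)) -> Ex P (f (t + 1)) = Ex P (f t).
  by move=> -> *; exact: Ex_comp_measure_preserving.
have [[shS _ _] [_ shV shz]] := (shiftSAR t, shiftGVz t).
apply: (Ex_telescope 2 i2 j2 j1 i3 intYD).
- move=> o; rewrite (recz (t + 1)) addrK /deltaL (recV t o) /deltab /Y /D /rbar !mxE.
  ring.
- apply: (stationary (fun u o => deltaL u o * z u o ord0 i) _ i2 j2).
  by rewrite /deltaL /xt; cbv beta; rewrite shS shV shz.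
- apply: (stationary (fun u o => deltaL u o * xt u o ord0 i) _ i1 j1).
  by rewrite /deltaL /xt; cbv beta; rewrite shS shV.
- apply: (Ex_mul_perp0 (hist_meas (t + 1)) _ D_perp _ mY intYD).
  exact: integB.
Qed.
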